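(* Let $\mathbf{L}$ be a distributive lattice, $n\ge1$ an integer, $F$ an $n$-filter on $\mathbf{L}$ and $I$ an ideal of $\mathbf{L}$ with $F\cap I=\emptyset$. Then there is a prime $n$-filter $G\supseteq F$ on $\mathbf{L}$ with $G\cap I=\emptyset$.
   Context: For a set $X$, $Y\subseteq_n X$ means $Y$ is a non-empty subset of $X$ with $|Y|\le n$. An $n$-filter on a lattice is an upset $F$ such that for every non-empty finite $X\subseteq F$: if $\bigwedge Y\in F$ for every $Y\subseteq_n X$ then $\bigwedge X\in F$. A prime $n$-filter is an $n$-filter $F$ such that $a\vee b\in F$ implies $a\in F$ or $b\in F$. An ideal is a downset closed under binary joins (possibly empty). *)

From mathcomp Require Import all_boot all_order.
Set Implicit Arguments. Unset Strict Implicit. Unset Printing Implicit Defensive.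
Import Order.LTheory.
Local Open Scope order_scope.

Section NFilters.
Context {disp : Order.disp_t} {L : latticeType disp}.

(* Meet of the non-empty finite family {x} ∪ (elements of s). Since meet is
   idempotent, commutative and associative, this is the meet of the underlying set. *)
Definition bigmeet (x : L) (s : seq L) : L := foldr Order.meet x s.

Definition upset (F : L -> Prop) : Prop :=
  forall a b : L, a <= b -> F a -> F b.

(* n-filter: upset F such that for every non-empty finite X ⊆ F
   (X = set of elements of x :: s), if ⋀Y ∈ F for every non-empty Y ⊆ X with
   |Y| <= n (Y = set of elements of y :: t with size (y :: t) <= n),
   then ⋀X ∈ F. *)
Definition nfilter (n : nat) (F : L -> Prop) : Prop :=
  upset F /\
  forall (x : L) (s : seq L),
    (forall z, z \in x :: s -> F z) ->
    (forall (y : L) (t : seq L),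
        (forall z, z \in y :: t -> z \in x :: s) ->
        (size (y :: t) <= n)%N ->
        F (bigmeet y t)) ->
    F (bigmeet x s).

Definition prime_nfilter (n : nat) (F : L -> Prop) : Prop :=
  nfilter n F /\ forall a b : L, F (a `|` b) -> F a \/ F b.

(* ideal: downset closed under binary joins (possibly empty) *)
Definition ideal (I : L -> Prop) : Prop :=
  (forall a b : L, a <= b -> I b -> I a) /\
  (forall a b : L, I a -> I b -> I (a `|` b)).

End NFilters.

From mathcomp Require Import all_boot all_order.
From mathcomp Require Import boolp classical_sets.
Set Implicit Arguments. Unset Strict Implicit. Unset Printing Implicit Defensive.
Import Order.LTheory.
Local Open Scope classical_set_scope.
Local Open Scope order_scope.

(* By Zorn's lemma there is an n-filter G containing F, maximal among the
   n-filters missing I; unions of chains of n-filters are n-filters because the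
   n-filter condition only involves finitely many meets.  By distributivity, for
   every c the set G_c = {x | x `|` c \in G} is an n-filter containing G, so
   G_c = G as soon as G_c misses I.  Now let a `|` b \in G.  Either G_b misses
   I, and then a \in G_b = G; or i `|` b \in G for some i \in I, and then G_i
   misses I because I is closed under joins, so b \in G_i = G. *)

Section SeqsUpto.
Variable T : eqType.

Fixpoint seqs_upto (k : nat) (u : seq T) : seq (seq T) :=
  if k is k'.+1 then [::] :: [seq a :: w | a <- u, w <- seqs_upto k' u]
  else [:: [::]].

Lemma mem_seqs_upto k u w :
  (w \in seqs_upto k u) = (size w <= k)%N && all (mem u) w.
Proof.
elim: k w => [|k IH] [|a w] //=; rewrite inE /=.
apply/allpairsP/idP => [[[b w'] [/= bu w'k [-> ->]]]|/and3P[wk au wu]].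
  by move: w'k; rewrite IH ltnS bu => /andP[-> ->].
by exists (a, w); rewrite IH -ltnS wk wu.
Qed.

End SeqsUpto.

Lemma lift_subset_map (T U : eqType) (f : T -> U) (w : seq U) (v : seq T) :
  {subset w <= map f v} -> exists2 w' : seq T, map f w' = w & {subset w' <= v}.
Proof.
elim: w => [|a w IH] sub_w; first by exists [::].
have [w' <- sub_w'] : exists2 w', map f w' = w & {subset w' <= v}.
  by apply: IH => z zw; apply: sub_w; rewrite inE zw orbT.
have /mapP[a' a'v ->] := sub_w a (mem_head a w).
by exists (a' :: w') => // z; rewrite inE => /predU1P[->|/sub_w'].
Qed.

Section Chains.
Variable T : Type.

Lemma total_on_bound (U : eqType) (C : set (set T)) (R : U -> set T -> Prop)
    (ps : seq U) :
  total_on C subset -> C !=set0 ->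
  (forall p G H, G `<=` H -> R p G -> R p H) ->
  (forall p, p \in ps -> exists2 G, C G & R p G) ->
  exists2 G, C G & forall p, p \in ps -> R p G.
Proof.
move=> totC [G0 CG0] monoR; elim: ps => [|p ps IH] reach; first by exists G0.
have [G1 CG1 RG1] : exists2 G, C G & forall q, q \in ps -> R q G.
  by apply: IH => q qps; apply: reach; rewrite inE qps orbT.
have [G2 CG2 RG2] := reach p (mem_head p ps).
have [G12|G21] := totC _ _ CG1 CG2.
- exists G2 => // q; rewrite inE => /predU1P[-> //|/RG1]; exact: monoR.
- exists G1 => // q; rewrite inE => /predU1P[->|/RG1 //]; exact: monoR RG2.
Qed.

Lemma Zorn_above (P : set (set T)) (F : set T) :
  P F -> (forall C, C `<=` P -> total_on C subset -> P (\bigcup_(X in C) X)) ->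
  exists G, [/\ P G, F `<=` G & forall H, P H -> G `<=` H -> H `<=` G].
Proof.
move=> PF Pchain.
pose above G := P G /\ F `<=` G.
pose S := {G : set T | above G}.
pose R (A B : S) := `[< sval A `<=` sval B >].
have F0 : S := exist above F (conj PF (@subset_refl _ F)).
have [[G [PG FG]] Gmax] : exists G : S, premaximal R G.
  apply: (ZL_preorder F0).
  - by move=> A; apply/asboolP.
  - by move=> A B D /asboolP AB /asboolP BD; apply/asboolP; exact: subset_trans BD.
  move=> A totA; have [[A0 AA0]|noA] := pselect (A !=set0); last first.
    by exists F0 => B AB; case: noA; exists B.
  have PU : P (\bigcup_(X in sval @` A) X).
    apply: Pchain; first by move=> _ [B _ <-]; case: (svalP B).
    move=> _ _ [B AB <-] [D AD <-].
    by case: (totA _ _ AB AD) => /asboolP; [left|right].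
  have FU : F `<=` \bigcup_(X in sval @` A) X.
    by move=> x Fx; exists (sval A0); [exact: imageP|case: (svalP A0) => _; apply].
  exists (exist above _ (conj PU FU)) => B AB; apply/asboolP.
  exact: (bigcup_sup (imageP sval AB)).
exists G; split => // H PH GH.
have FH : F `<=` H := subset_trans FG GH.
by have /asboolP := Gmax (exist above H (conj PH FH)) (asboolT GH).
Qed.

End Chains.

Lemma nfilter_bigcup (disp : Order.disp_t) (L : latticeType disp) n (C : set (set L)) :
  total_on C subset -> (forall G, C G -> nfilter n G) ->
  nfilter n (\bigcup_(G in C) G).
Proof.
move=> totC nfC; split.
  by move=> a b ab [G CG Ga]; exists G => //; exact: (proj1 (nfC G CG)) ab Ga.
move=> x s sub_s small_meets.
pose R (w : seq L) (G : set L) := if w is y :: t then G (bigmeet y t) else True.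
pose ps := [seq [:: z] | z <- x :: s] ++ seqs_upto n (x :: s).
have [G0 CG0 _] := sub_s x (mem_head x s).
have [G CG RG] : exists2 G, C G & forall w, w \in ps -> R w G.
  apply: total_on_bound => //; first by exists G0.
    by move=> [|y t] G H //= GH /GH.
  move=> w; rewrite mem_cat => /orP[/mapP[z zs ->]|].
    by have [G CG Gz] := sub_s z zs; exists G.
  case: w => [|y t]; first by exists G0.
  rewrite mem_seqs_upto => /andP[yt_n /allP yt_s].
  by have [G CG Gyt] := small_meets y t yt_s yt_n; exists G.
exists G => //; apply: (proj2 (nfC G CG)) => [z zs|y t yt_s yt_n].
  by apply: (RG [:: z]); rewrite mem_cat map_f.
by apply: (RG (y :: t)); rewrite mem_cat mem_seqs_upto yt_n (introT allP yt_s) orbT.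
Qed.

Section DistrLatticeNFilters.
Context {disp : Order.disp_t} {L : distrLatticeType disp}.

Lemma join_bigmeetl (c x : L) (s : seq L) :
  bigmeet x s `|` c = bigmeet (x `|` c) (map (fun z => z `|` c) s).
Proof. by elim: s => [|a s IH] //=; rewrite joinIl IH. Qed.

Lemma nfilter_joinr n (G : set L) (c : L) :
  nfilter n G -> nfilter n (fun z => G (z `|` c)).
Proof.
move=> [Gup Gmeet]; split=> [a b ab|x s sub_s small_meets].
  by apply: Gup; rewrite leUx lexUl // lexUr.
rewrite join_bigmeetl; apply: Gmeet => [z zxs|y t yt_s yt_n].
  have /mapP[z' z's ->] : z \in map (fun z => z `|` c) (x :: s) := zxs.
  exact: sub_s.
have [[|y' t'] // [ey et] yt'_s] := lift_subset_map (v := x :: s) yt_s.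
subst y t; rewrite -join_bigmeetl; apply: small_meets => //.
by rewrite /= size_map in yt_n.
Qed.

Lemma maximal_nfilter_prime n (G I : set L) :
  ideal I -> nfilter n G -> (forall x, G x -> ~ I x) ->
  (forall H, nfilter n H -> G `<=` H -> (forall x, H x -> ~ I x) -> H `<=` G) ->
  forall a b, G (a `|` b) -> G a \/ G b.
Proof.
move=> [_ Ijoin] nfG GI Gmax a b Gab.
pose shift c x := G (x `|` c).
have shift_max c : (forall x, shift c x -> ~ I x) -> shift c `<=` G.
  move=> shiftI; apply: Gmax => //; first exact: nfilter_joinr.
  by move=> x; apply: (proj1 nfG); exact: leUl.
have [[i Gib Ii]|shiftbI] := pselect (exists2 i, shift b i & I i).
  right; apply: (shift_max i); last by rewrite /shift joinC.
  by move=> x Gxi Ix; exact: GI Gxi (Ijoin _ _ Ix Ii).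
by left; apply: (shift_max b) Gab => x Gxb Ix; apply: shiftbI; exists x.
Qed.

End DistrLatticeNFilters.

Theorem mainTheorem8 (disp : Order.disp_t) (L : distrLatticeType disp) (n : nat)
  (F I : L -> Prop) :
  (1 <= n)%N -> nfilter n F -> ideal I ->
  (forall x : L, F x -> ~ I x) ->
  exists G : L -> Prop,
    prime_nfilter n G /\ (forall x : L, F x -> G x) /\ (forall x : L, G x -> ~ I x).
Proof.
(* The construction works for every n. *)
move=> _ nfF idI FI.
pose good (G : set L) := nfilter n G /\ forall x, G x -> ~ I x.
have good_chain C : C `<=` good -> total_on C subset -> good (\bigcup_(X in C) X).
  move=> Cgood totC; split; first by apply: nfilter_bigcup => // G /Cgood[].
  by move=> x [G /Cgood[_ GI] Gx]; exact: GI.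
have [G [[nfG GI] FG Gmax]] := Zorn_above (conj nfF FI : good F) good_chain.
exists G; split=> //; split=> //.
apply: (maximal_nfilter_prime idI nfG GI) => H nfH GH HI.
exact: Gmax (conj nfH HI) GH.
Qed.
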